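(* Let $n\geq3$, $(R,\Lambda)$ a form ring, $C'\subseteq\mathrm{center}(R)$ a subring, $C$ the subring of $R$ of all finite sums of elements $c\bar c$ and $-c\bar c$ with $c\in C'$, and assume $R$ is a Noetherian $C$-module. Let $(I,\Gamma)$ be a form ideal of $(R,\Lambda)$ and $m$ a maximal ideal of $C$. Then there is $s_0\in S_m$ such that (1) if $x\in s_0R$ and $tx\in I$ for some $t\in S_m$, then $x\in I$; (2) if $x\in s_0R$ and $tx\in\Gamma$ for some $t\in S_m$, then $x\in\Gamma$. Moreover, $\phi_m$ is injective on $\psi(U_{2n}((R,\Lambda),(s_0R,s_0\Lambda)))$.
   Context: Rings are associative with $1\neq0$; $r\mapsto\bar r$ is an involution on $R$, $\lambda\in\mathrm{center}(R)$ with $\lambda\bar\lambda=1$. A form parameter is an additive subgroup $\Lambda$ with $\{r-\lambda\bar r\}\subseteq\Lambda\subseteq\{r:r=-\lambda\bar r\}$ and $r\Lambda\bar r\subseteq\Lambda$ for all $r$. A form ideal $(I,\Gamma)$: $I$ an ideal with $\bar I=I$, $\Gamma$ an additive subgroup with $\{\xi-\lambda\bar\xi:\xi\in I\}+\langle\zeta\alpha\bar\zeta:\zeta\in I,\alpha\in\Lambda\rangle\subseteq\Gamma\subseteq I\cap\Lambda$ and $\alpha\Gamma\bar\alpha\subseteq\Gamma$ for all $\alpha\in R$. Indices $\Omega=\{1,\dots,n,-n,\dots,-1\}$; for columns $u,v$: $\mathbbm{f}(u,v)=\sum_{i=1}^n\bar u_iv_{-i}$, $\mathbbm{h}(u,v)=\sum_{i=1}^n(\bar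 u_iv_{-i}+\lambda\bar u_{-i}v_i)$. $U_{2n}(R,\Lambda)$ = all $\sigma\in GL_{2n}(R)$ with $\mathbbm{h}(\sigma u,\sigma v)=\mathbbm{h}(u,v)$ and $\mathbbm{f}(\sigma u,\sigma u)-\mathbbm{f}(u,u)\in\Lambda$ for all $u,v$. For an involution invariant ideal $J$ and additive subgroup $\Delta\subseteq J\cap\Lambda$ (e.g. $(I,\Gamma)$ or $(s_0R,s_0\Lambda)$), $U_{2n}((R,\Lambda),(J,\Delta))$ = all $\sigma\in U_{2n}(R,\Lambda)$ with $\sigma\equiv e\pmod J$ and $\mathbbm{f}(\sigma u,\sigma u)-\mathbbm{f}(u,u)\in\Delta$ for all $u$. Localization: $C$ is central and fixed by the involution. $S_m=C\setminus m$, $R_m=S_m^{-1}R$ (involution $\overline{r/s}=\bar r/s$), $\Lambda_m=S_m^{-1}\Lambda$, $I_m=S_m^{-1}I$, $\Gamma_m=S_m^{-1}\Gamma$; $F_m:U_{2n}(R,\Lambda)\to U_{2n}(R_m,\Lambda_m)$ applies the localization map entrywise; $\psi:U_{2n}(R,\Lambda)\to U_{2n}(R,\Lambda)/U_{2n}((R,\Lambda),(I,\Gamma))$ is the canonical map; $\phi_m:U_{2n}(R,\Lambda)/U_{2n}((R,\Lambda),(I,\Gamma))\to U_{2n}(R_m,\Lambda_m)/U_{2n}((R_m,\Lambda_m),(I_m,\Gamma_m))$ is induced by $F_m$. *)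

From HB Require Import structures.
From mathcomp Require Import all_boot all_algebra.
Set Implicit Arguments.
Unset Strict Implicit.
Unset Printing Implicit Defensive.
Import GRing.Theory.
Local Open Scope ring_scope.

Section RingDefs.
Variable R : nzRingType.

Definition is_involution (bar : R -> R) : Prop :=
  [/\ (forall x y, bar (x + y) = bar x + bar y),
      (forall x y, bar (x * y) = bar y * bar x),
      (forall x, bar (bar x) = x) & bar 1 = 1].

Definition central (c : R) : Prop := forall r : R, c * r = r * c.

Definition add_subgroup (A : R -> Prop) : Prop :=
  A 0 /\ (forall x y, A x -> A y -> A (x - y)).

Definition form_parameter (bar : R -> R) (lam : R) (L : R -> Prop) : Prop :=
  [/\ add_subgroup L,
      (forall r, L (r - lam * bar r)),
      (forall r, L r -> r = - (lam * bar r)) &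
      (forall r a, L a -> L (r * a * bar r))].

Definition form_ring (bar : R -> R) (lam : R) (L : R -> Prop) : Prop :=
  [/\ is_involution bar, central lam, lam * bar lam = 1 &
      form_parameter bar lam L].

Definition two_sided_ideal (I : R -> Prop) : Prop :=
  [/\ add_subgroup I, (forall r x, I x -> I (r * x)) &
      (forall r x, I x -> I (x * r))].

Definition form_ideal (bar : R -> R) (lam : R) (L I G : R -> Prop) : Prop :=
  two_sided_ideal I /\
  (forall x, I (bar x) <-> I x) /\
  add_subgroup G /\
  (forall x, I x -> G (x - lam * bar x)) /\
  (forall z a, I z -> L a -> G (z * a * bar z)) /\
  (forall x, G x -> I x /\ L x) /\
  (forall a x, G x -> G (a * x * bar a)).

(* Indices Omega = {1..n,-n..-1} are the positions 'I_(n+n):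
   position p < n stands for index p+1, and position rev_ord p
   (= 2n-1-p) stands for index -(p+1). *)
Definition fform (bar : R -> R) (n : nat) (u v : 'cV[R]_(n + n)) : R :=
  \sum_(i < n) bar (u (lshift n i) 0) * v (rev_ord (lshift n i)) 0.

Definition hform (bar : R -> R) (lam : R) (n : nat) (u v : 'cV[R]_(n + n)) : R :=
  \sum_(i < n) (bar (u (lshift n i) 0) * v (rev_ord (lshift n i)) 0
                + lam * bar (u (rev_ord (lshift n i)) 0) * v (lshift n i) 0).

Definition invertible_mx (n : nat) (s : 'M[R]_(n + n)) : Prop :=
  exists t : 'M[R]_(n + n), s *m t = 1%:M /\ t *m s = 1%:M.

Definition unitary (bar : R -> R) (lam : R) (L : R -> Prop) (n : nat)
  (s : 'M[R]_(n + n)) : Prop :=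
  [/\ invertible_mx s,
      (forall u v, hform bar lam (s *m u) (s *m v) = hform bar lam u v) &
      (forall u, L (fform bar (s *m u) (s *m u) - fform bar u u))].

Definition unitary_rel (bar : R -> R) (lam : R) (L J D : R -> Prop) (n : nat)
  (s : 'M[R]_(n + n)) : Prop :=
  [/\ unitary bar lam L s,
      (forall i j, J (s i j - (1%:M : 'M[R]_(n + n)) i j)) &
      (forall u, D (fform bar (s *m u) (s *m u) - fform bar u u))].

Definition coset_eq (n : nat) (N : 'M[R]_(n + n) -> Prop) (s t : 'M[R]_(n + n)) : Prop :=
  exists si : 'M[R]_(n + n), [/\ si *m s = 1%:M, s *m si = 1%:M & N (si *m t)].

Definition subring (A : R -> Prop) : Prop :=
  [/\ add_subgroup A, A 1 & (forall x y, A x -> A y -> A (x * y))].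

Inductive sums_cbarc (bar : R -> R) (Cp : R -> Prop) : R -> Prop :=
| sc_nil : sums_cbarc bar Cp 0
| sc_pos x c : sums_cbarc bar Cp x -> Cp c -> sums_cbarc bar Cp (x + c * bar c)
| sc_neg x c : sums_cbarc bar Cp x -> Cp c -> sums_cbarc bar Cp (x - c * bar c).

Definition C_submodule (C M : R -> Prop) : Prop :=
  add_subgroup M /\ (forall c x, C c -> M x -> M (c * x)).

Definition noetherian_module (C : R -> Prop) : Prop :=
  forall M : R -> Prop, C_submodule C M ->
    exists gs : seq R, (forall i, (i < size gs)%N -> M gs`_i) /\
      (forall x, M x -> exists cs : seq R,
         [/\ size cs = size gs, (forall i, (i < size cs)%N -> C cs`_i) &
             x = \sum_(i < size gs) cs`_i * gs`_i]).

Definition ideal_of (C m : R -> Prop) : Prop :=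
  [/\ (forall x, m x -> C x), add_subgroup m &
      (forall c x, C c -> m x -> m (c * x))].

Definition maximal_ideal_of (C m : R -> Prop) : Prop :=
  [/\ ideal_of C m, ~ m 1 &
      (forall m', ideal_of C m' -> (forall x, m x -> m' x) -> ~ m' 1 ->
         forall x, m' x -> m x)].

Definition Sm (C m : R -> Prop) (c : R) : Prop := C c /\ ~ m c.

Definition mul_set (s0 : R) (A : R -> Prop) (x : R) : Prop :=
  exists a, A a /\ x = s0 * a.

End RingDefs.

(* F : R -> R' is (a model of) the localization S^{-1} R at a central
   multiplicative set S (characterized up to isomorphism by the universal
   properties below). *)
Definition is_localization (R R' : nzRingType) (S : R -> Prop)
  (F : {rmorphism R -> R'}) : Prop :=
  [/\ (forall s, S s -> exists y, F s * y = 1 /\ y * F s = 1),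
      (forall r, F r = 0 -> exists s, S s /\ s * r = 0) &
      (forall x : R', exists r s, S s /\ x * F s = F r)].

Definition loc_set (R R' : nzRingType) (S : R -> Prop)
  (F : {rmorphism R -> R'}) (A : R -> Prop) (x : R') : Prop :=
  exists a s, [/\ A a, S s & x * F s = F a].

(* For a C-submodule P of R, the elements x with t x in P for some t in S_m form
   again a C-submodule; by Noetherianity it is finitely generated, so a single
   s in S_m (the product of the finitely many denominators) sends it into P.
   Taking s_0 = s_1 s_2 for P = I and P = Gamma gives (1) and (2).  If s and t
   lie in the relative group of level s_0 and F(s^-1 t) lies in the relative
   group of (I_m, Gamma_m), then every entry of s^-1 t - e and every increment
   of f along s^-1 t lies in s_0 R, and its image under F lies in I_m resp.
   Gamma_m; pulling back along the localization and applying (1) and (2) puts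
   s^-1 t into U_2n((R, Lambda), (I, Gamma)). *)

From HB Require Import structures.
From mathcomp Require Import all_boot all_algebra.
Import GRing.Theory.
Local Open Scope ring_scope.

Set Implicit Arguments.
Unset Strict Implicit.

Section AddSubgroup.
Variables (R : nzRingType) (P : R -> Prop).
Hypothesis P_sub : add_subgroup P.

Lemma add_subgroup0 : P 0.
Proof. by case: P_sub. Qed.

Lemma add_subgroupB x y : P x -> P y -> P (x - y).
Proof. by case: P_sub => _; apply. Qed.

Lemma add_subgroupN x : P x -> P (- x).
Proof. by rewrite -sub0r; apply: add_subgroupB add_subgroup0. Qed.

Lemma add_subgroupD x y : P x -> P y -> P (x + y).
Proof. by move=> Px Py; rewrite -[y]opprK; apply/add_subgroupB/add_subgroupN. Qed.

Lemma add_subgroup_sum k (f : 'I_k -> R) :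
  (forall i, P (f i)) -> P (\sum_(i < k) f i).
Proof.
by move=> Pf; elim/big_ind: _ => //; [exact: add_subgroup0 | exact: add_subgroupD].
Qed.

End AddSubgroup.

Section MaximalIdeal.
Variables (R : nzRingType) (C m : R -> Prop).
Hypotheses (C_sub : subring C) (C_central : forall c, C c -> central c).
Hypothesis m_max : maximal_ideal_of C m.

Lemma Sm1 : Sm C m 1.
Proof. by case: C_sub m_max => _ C1 _ [_ m1 _]. Qed.

Lemma Sm_mul a b : Sm C m a -> Sm C m b -> Sm C m (a * b).
Proof.
have [C_add_sub C1 C_mul] := C_sub.
have [[mC m_sub m_mul] _ m_maximal] := m_max.
move=> [Ca ma] [Cb mb]; split; first exact: C_mul.
move=> mab.
(* Maximality applied to m + C a yields 1 = y + c a with y in m, so that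
   b = b y + c (a b) lies in m. *)
pose m' x := exists y c, [/\ m y, C c & x = y + c * a].
have m'_ideal : ideal_of C m'.
  split.
  - move=> _ [y [c [my Cc ->]]].
    exact: (add_subgroupD C_add_sub) (mC _ my) (C_mul _ _ Cc Ca).
  - split; first by exists 0, 0; rewrite mul0r addr0; split=> //; exact: add_subgroup0.
    move=> _ _ [y1 [c1 [my1 Cc1 ->]]] [y2 [c2 [my2 Cc2 ->]]].
    exists (y1 - y2), (c1 - c2); split.
    + exact: (add_subgroupB m_sub my1 my2).
    + exact: (add_subgroupB C_add_sub Cc1 Cc2).
    + by rewrite mulrBl opprD addrACA.
  - move=> c _ Cc [y [c' [my Cc' ->]]]; exists (c * y), (c * c').
    by split; [exact: m_mul | exact: C_mul | rewrite mulrDr mulrA].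
have m_m' x : m x -> m' x.
  by move=> mx; exists x, 0; rewrite mul0r addr0; split=> //; exact: add_subgroup0.
have m'a : m' a by exists 0, 1; rewrite mul1r add0r; split=> //; exact: add_subgroup0.
have : ~ ~ m' 1 by move=> m'1; apply: ma; exact: m_maximal m' m'_ideal m_m' m'1 a m'a.
apply=> -[y [c [my Cc e]]]; apply: mb.
have -> : b = b * y + c * (a * b).
  by rewrite mulrA (C_central Cb y) -mulrDl -e mul1r.
by apply: (add_subgroupD m_sub); apply: m_mul.
Qed.

End MaximalIdeal.

Section Saturation.
Variables (R : nzRingType) (C S : R -> Prop).
Hypotheses (C_central : forall c, C c -> central c) (S_C : forall s, S s -> C s).
Hypotheses (S1 : S 1) (S_mul : forall a b, S a -> S b -> S (a * b)).

Definition saturates (P : R -> Prop) (s : R) : Prop :=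
  forall y t, S t -> P (t * y) -> P (s * y).

Lemma saturates_mul_set P s s' x t :
  saturates P s -> S s -> mul_set (s * s') (fun _ => True) x ->
  S t -> P (t * x) -> P x.
Proof.
move=> sat_s Ss [a [_ ->]] St Px; rewrite -mulrA.
by apply: (sat_s _ (t * s)); [exact: S_mul | rewrite !mulrA in Px *].
Qed.

Section Submodule.
Variable P : R -> Prop.
Hypotheses (P_sub : add_subgroup P) (P_mulC : forall c x, C c -> P x -> P (c * x)).

Definition saturation (x : R) : Prop := exists t, S t /\ P (t * x).

Lemma saturation_submodule : C_submodule C saturation.
Proof.
split; first split.
- by exists 1; rewrite mulr0; split=> //; exact: add_subgroup0.
- move=> x y [t1 [St1 Px]] [t2 [St2 Py]]; exists (t1 * t2); split; first exact: S_mul.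
  have -> : t1 * t2 * (x - y) = t2 * (t1 * x) - t1 * (t2 * y).
    by rewrite mulrBr !mulrA (C_central (S_C St1) t2).
  by apply: (add_subgroupB P_sub); apply: P_mulC => //; exact: S_C.
- move=> c x Cc [t [St Px]]; exists t; split=> //.
  by rewrite mulrA -(C_central Cc t) -mulrA; exact: P_mulC.
Qed.

Lemma saturation_common_multiplier (gs : seq R) :
  (forall i, (i < size gs)%N -> saturation gs`_i) ->
  exists s, S s /\ forall i, (i < size gs)%N -> P (s * gs`_i).
Proof.
elim: gs => [|g gs IH] sat_gs; first by exists 1.
have [t [St Ptg]] := sat_gs 0%N isT.
have [s [Ss Psgs]] := IH (fun i => sat_gs i.+1).
exists (t * s); split; first exact: S_mul.
case=> [_|i lt_i] /=; last by rewrite -mulrA; apply/P_mulC/Psgs/lt_i/S_C.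
by rewrite (C_central (S_C St) s) -mulrA; apply/P_mulC/Ptg/S_C.
Qed.

Lemma exists_saturating : noetherian_module C -> exists s, S s /\ saturates P s.
Proof.
move=> noeth; have [gs [sat_gs span_gs]] := noeth _ saturation_submodule.
have [s [Ss Psgs]] := saturation_common_multiplier sat_gs.
exists s; split=> // y t St Pty.
have [cs [size_cs Ccs ->]] := span_gs y (ex_intro _ t (conj St Pty)).
rewrite mulr_sumr; apply: (add_subgroup_sum P_sub) => i.
rewrite mulrA (C_central (S_C Ss)) -mulrA; apply: P_mulC; last exact: Psgs.
by apply: Ccs; rewrite size_cs.
Qed.

End Submodule.

End Saturation.

Section SumsOfNorms.
Variables (R : nzRingType) (bar : R -> R) (Cp : R -> Prop).
Hypotheses (bar_inv : is_involution bar) (Cp_sub : subring Cp).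
Hypothesis Cp_central : forall c, Cp c -> central c.
Local Notation C := (sums_cbarc bar Cp).

Lemma central_bar c : central c -> central (bar c).
Proof.
case: bar_inv => _ bar_mul bar_bar _ c_central r.
by rewrite -{1}(bar_bar r) -bar_mul -c_central bar_mul bar_bar.
Qed.

Lemma norm_mulC c x : Cp c -> c * bar c * x = c * x * bar c.
Proof. by move=> Cpc; rewrite -mulrA (central_bar (Cp_central Cpc)) mulrA. Qed.

Lemma sums_cbarc_mul_closed (P : R -> Prop) :
  add_subgroup P -> (forall c x, Cp c -> P x -> P (c * x * bar c)) ->
  forall z x, C z -> P x -> P (z * x).
Proof.
move=> P_sub P_conj z x; elim=> [|y c _ IH Cpc|y c _ IH Cpc] Px.
- by rewrite mul0r; exact: add_subgroup0 P_sub.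
- by rewrite mulrDl norm_mulC //; apply: (add_subgroupD P_sub); auto.
- by rewrite mulrBl norm_mulC //; apply: (add_subgroupB P_sub); auto.
Qed.

Lemma sums_cbarc_add_subgroup : add_subgroup C.
Proof.
split=> [|x y Cx]; first exact: sc_nil.
elim=> [|z c _ IH Cpc|z c _ IH Cpc]; first by rewrite subr0.
- by rewrite opprD addrA; apply: sc_neg.
- by rewrite opprB addrCA addrC; apply: sc_pos.
Qed.

Lemma sums_cbarc_conj c y : Cp c -> C y -> C (c * y * bar c).
Proof.
have [_ bar_mul _ _] := bar_inv; have [_ _ Cp_mul] := Cp_sub.
move=> Cpc; elim=> [|z d _ IH Cpd|z d _ IH Cpd].
- by rewrite mulr0 mul0r; exact: sc_nil.
- rewrite mulrDr mulrDl (_ : c * (d * bar d) * bar c = c * d * bar (c * d)).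
    by apply: sc_pos => //; exact: Cp_mul.
  by rewrite bar_mul !mulrA.
- rewrite mulrBr mulrBl (_ : c * (d * bar d) * bar c = c * d * bar (c * d)).
    by apply: sc_neg => //; exact: Cp_mul.
  by rewrite bar_mul !mulrA.
Qed.

Lemma sums_cbarc_subring : subring C.
Proof.
have [_ _ _ bar1] := bar_inv; have [_ Cp1 _] := Cp_sub.
split; first exact: sums_cbarc_add_subgroup.
  by rewrite -[1]add0r -[X in 0 + X]mulr1 -{2}bar1; apply: sc_pos => //; exact: sc_nil.
exact: sums_cbarc_mul_closed sums_cbarc_add_subgroup sums_cbarc_conj.
Qed.

Lemma sums_cbarc_central x : C x -> central x.
Proof.
elim=> [r|y c _ IH Cpc r|y c _ IH Cpc r]; first by rewrite mul0r mulr0.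
- by rewrite mulrDl mulrDr IH norm_mulC // (Cp_central Cpc r) mulrA.
- by rewrite mulrBl mulrBr IH norm_mulC // (Cp_central Cpc r) mulrA.
Qed.

End SumsOfNorms.

Section MulSet.
Variables (R : nzRingType) (s0 : R).

Lemma mul_set_add_subgroup : add_subgroup (mul_set s0 (fun _ => True)).
Proof.
split; first by exists 0; rewrite mulr0.
by move=> _ _ [a [_ ->]] [b [_ ->]]; exists (a - b); rewrite mulrBr.
Qed.

Lemma mul_set_mull r x : central s0 ->
  mul_set s0 (fun _ => True) x -> mul_set s0 (fun _ => True) (r * x).
Proof. by move=> s0_central [a [_ ->]]; exists (r * a); rewrite !mulrA s0_central. Qed.

End MulSet.

Lemma loc_set_pull (R R' : nzRingType) (S : R -> Prop) (F : {rmorphism R -> R'})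
    (P : R -> Prop) x :
  is_localization S F -> (forall a b, S a -> S b -> S (a * b)) ->
  (forall s, S s -> central s) -> (forall s a, S s -> P a -> P (s * a)) ->
  loc_set S F P (F x) -> exists t, S t /\ P (t * x).
Proof.
move=> [_ F_ker _] S_mul S_central P_mulS [a [s [Pa Ss e]]].
have [u [Su eu]] : exists u, S u /\ u * (x * s - a) = 0.
  by apply: F_ker; rewrite rmorphB rmorphM e subrr.
exists (u * s); split; first exact: S_mul.
have -> : u * s * x = u * a.
  by apply/eqP; rewrite -subr_eq0 -mulrA (S_central s Ss x) -mulrBr eu.
exact: P_mulS.
Qed.

Lemma fform_map (R R' : nzRingType) (F : {rmorphism R -> R'}) bar bar' n
    (u v : 'cV[R]_(n + n)) :
  (forall r, bar' (F r) = F (bar r)) ->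
  fform bar' (map_mx F u) (map_mx F v) = F (fform bar u v).
Proof.
move=> bar_F; rewrite /fform rmorph_sum.
by apply: eq_bigr => i _; rewrite !mxE rmorphM bar_F.
Qed.

Section LeftQuotient.
Variables (R : nzRingType) (bar : R -> R) (lam : R) (n : nat).
Variables (s si t : 'M[R]_(n + n)).
Hypotheses (s_si : s *m si = 1%:M) (si_s : si *m s = 1%:M).

Lemma mulmx_left_quotient (u : 'cV[R]_(n + n)) : s *m (si *m t *m u) = t *m u.
Proof. by rewrite !mulmxA s_si mul1mx. Qed.

Lemma fform_incr_left_quotient (D : R -> Prop) :
  add_subgroup D ->
  (forall u, D (fform bar (s *m u) (s *m u) - fform bar u u)) ->
  (forall u, D (fform bar (t *m u) (t *m u) - fform bar u u)) ->
  forall u, D (fform bar (si *m t *m u) (si *m t *m u) - fform bar u u).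
Proof.
move=> D_sub D_s D_t u.
have := add_subgroupB D_sub (D_t u) (D_s (si *m t *m u)).
by rewrite mulmx_left_quotient opprB addrC subrKA.
Qed.

Lemma unitary_left_quotient (L : R -> Prop) :
  add_subgroup L -> unitary bar lam L s -> unitary bar lam L t ->
  unitary bar lam L (si *m t).
Proof.
move=> L_sub [_ s_h s_f] [[ti [t_ti ti_t]] t_h t_f]; split.
- exists (ti *m s); split.
    by rewrite mulmxA -(mulmxA si) t_ti mulmx1 si_s.
  by rewrite mulmxA -(mulmxA ti) s_si mulmx1 ti_t.
- by move=> u v; rewrite -(s_h (si *m t *m u)) !mulmx_left_quotient t_h.
- exact: fform_incr_left_quotient.
Qed.

Lemma entries_left_quotient (J : R -> Prop) :
  add_subgroup J -> (forall r x, J x -> J (r * x)) ->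
  (forall i j, J (s i j - (1%:M : 'M[R]_(n + n)) i j)) ->
  (forall i j, J (t i j - (1%:M : 'M[R]_(n + n)) i j)) ->
  forall i j, J ((si *m t) i j - (1%:M : 'M[R]_(n + n)) i j).
Proof.
move=> J_sub J_mull J_s J_t i j.
have -> : (si *m t) i j - 1%:M i j = (si *m (t - s)) i j.
  by rewrite mulmxBr si_s !mxE.
rewrite mxE; apply: (add_subgroup_sum J_sub) => k; apply: J_mull.
have := add_subgroupB J_sub (J_t k j) (J_s k j).
by rewrite opprB subrKA !mxE.
Qed.

End LeftQuotient.

Section Injectivity.
Variables (R R' : nzRingType) (F : {rmorphism R -> R'}).
Variables (bar : R -> R) (bar' : R' -> R') (lam : R).
Variables (L I G S : R -> Prop) (n : nat) (s0 : R).
Hypotheses (L_sub : add_subgroup L) (loc : is_localization S F).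
Hypothesis S_mul : forall a b, S a -> S b -> S (a * b).
Hypothesis S_central : forall s, S s -> central s.
Hypothesis I_mulS : forall s x, S s -> I x -> I (s * x).
Hypothesis G_mulS : forall s x, S s -> G x -> G (s * x).
Hypotheses (bar_F : forall r, bar' (F r) = F (bar r)) (s0_central : central s0).
Local Notation J := (mul_set s0 (fun _ => True)).

Lemma loc_set_saturated (P : R -> Prop) :
  (forall s x, S s -> P x -> P (s * x)) ->
  (forall x t, J x -> S t -> P (t * x) -> P x) ->
  forall x, J x -> loc_set S F P (F x) -> P x.
Proof.
move=> P_mulS P_sat x Jx /(loc_set_pull loc S_mul S_central P_mulS) [t [St Ptx]].
exact: P_sat Jx St Ptx.
Qed.

Hypotheses (I_sat : forall x t, J x -> S t -> I (t * x) -> I x).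
Hypotheses (G_sat : forall x t, J x -> S t -> G (t * x) -> G x).

Lemma coset_eq_of_map_mx (s t : 'M[R]_(n + n)) :
  unitary_rel bar lam L J (mul_set s0 L) s ->
  unitary_rel bar lam L J (mul_set s0 L) t ->
  coset_eq (unitary_rel bar' (F lam) (loc_set S F L) (loc_set S F I)
              (loc_set S F G) (n:=n)) (map_mx F s) (map_mx F t) ->
  coset_eq (unitary_rel bar lam L I G (n:=n)) s t.
Proof.
move=> [s_U s_J s_D] [t_U t_J t_D] [si' [si's _ loc_U]].
have [[si [s_si si_s]] _ _] := s_U.
have si'E : si' = map_mx F si.
  by rewrite -[si']mulmx1 -(map_mx1 F) -s_si map_mxM mulmxA si's mul1mx.
rewrite si'E -map_mxM in loc_U; have [_ loc_J loc_D] := loc_U.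
have J_of_L x : mul_set s0 L x -> J x by case=> a [_ ->]; exists a.
exists si; split=> //; split.
- exact: (unitary_left_quotient s_si si_s L_sub s_U t_U).
- move=> i j; apply: (loc_set_saturated I_mulS I_sat).
    exact: (entries_left_quotient si_s (mul_set_add_subgroup s0)
      (fun r x => mul_set_mull r s0_central) s_J t_J i j).
  by have := loc_J i j; rewrite !mxE rmorphB rmorph_nat.
- move=> u; apply: (loc_set_saturated G_mulS G_sat).
    by apply: (fform_incr_left_quotient s_si (mul_set_add_subgroup s0)) => w;
      apply: J_of_L; [exact: s_D | exact: t_D].
  by have := loc_D (map_mx F u); rewrite -map_mxM !(fform_map _ _ bar_F) -rmorphB.
Qed.

End Injectivity.

Unset Implicit Arguments.

Theorem lemma4p2 (R : nzRingType) (bar : R -> R) (lam : R) (L : R -> Prop)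
  (n : nat) (Cp I G m : R -> Prop)
  (R' : nzRingType) (F : {rmorphism R -> R'}) (bar' : R' -> R') :
  (3 <= n)%N ->
  form_ring bar lam L ->
  subring Cp -> (forall c, Cp c -> central c) ->
  noetherian_module (sums_cbarc bar Cp) ->
  form_ideal bar lam L I G ->
  maximal_ideal_of (sums_cbarc bar Cp) m ->
  (* R' = R_m with its involution bar', F = localization map *)
  is_localization (Sm (sums_cbarc bar Cp) m) F ->
  is_involution bar' -> (forall r, bar' (F r) = F (bar r)) ->
  let S := Sm (sums_cbarc bar Cp) m in
  exists s0 : R, [/\ S s0,
    (forall x t, mul_set s0 (fun _ => True) x -> S t -> I (t * x) -> I x),
    (forall x t, mul_set s0 (fun _ => True) x -> S t -> G (t * x) -> G x) &
    (forall s t : 'M[R]_(n + n),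
       unitary_rel bar lam L (mul_set s0 (fun _ => True)) (mul_set s0 L) s ->
       unitary_rel bar lam L (mul_set s0 (fun _ => True)) (mul_set s0 L) t ->
       coset_eq (unitary_rel bar' (F lam) (loc_set S F L) (loc_set S F I)
                   (loc_set S F G) (n:=n)) (map_mx F s) (map_mx F t) ->
       coset_eq (unitary_rel bar lam L I G (n:=n)) s t)].
Proof.
move=> _ [bar_inv _ _ [L_sub _ _ _]] Cp_sub Cp_central noeth.
move=> [[I_sub I_mull _] [_ [G_sub [_ [_ [_ G_conj]]]]]] m_max loc _ bar_F S.
have C_sub := sums_cbarc_subring bar_inv Cp_sub Cp_central.
have C_central := sums_cbarc_central bar_inv Cp_central.
have S_mul := Sm_mul C_sub C_central m_max.
have S_C s : S s -> sums_cbarc bar Cp s by case.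
have S_central s : S s -> central s by move/S_C/C_central.
have G_mulC :=
  sums_cbarc_mul_closed bar_inv Cp_central G_sub (fun c x _ => G_conj c x).
have [s1 [Ss1 sat1]] := exists_saturating C_central S_C
  (Sm1 C_sub m_max) S_mul I_sub (fun c x _ => I_mull c x) noeth.
have [s2 [Ss2 sat2]] := exists_saturating C_central S_C
  (Sm1 C_sub m_max) S_mul G_sub G_mulC noeth.
have s0_comm : s2 * s1 = s1 * s2 by rewrite (S_central s1 Ss1).
have I_sat x t : mul_set (s1 * s2) (fun _ => True) x -> S t -> I (t * x) -> I x.
  exact: (saturates_mul_set S_mul sat1 Ss1).
have G_sat x t : mul_set (s1 * s2) (fun _ => True) x -> S t -> G (t * x) -> G x.
  by rewrite -s0_comm; exact: (saturates_mul_set S_mul sat2 Ss2).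
exists (s1 * s2); split=> //; first exact: S_mul.
apply: coset_eq_of_map_mx I_sat G_sat => //.
- by move=> s x _; exact: I_mull.
- by move=> s x /S_C; exact: G_mulC.
- by apply: S_central; exact: S_mul.
Qed.
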